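(* Let $C$ be a convex cone in $\mathbb{R}^n$ (usual topology) and $f:C\to\mathbb{R}$ a non-negative function that is positively homogeneous of degree $\alpha>0$. If $f$ is sub-convex, then $f$ is continuous on $\mathrm{ri}(C)$.
   Context: A cone is a subset $C$ with $\lambda C\subseteq C$ for all $\lambda>0$. $f$ is positively homogeneous of degree $\alpha$ if $f(\lambda x)=\lambda^{\alpha}f(x)$ for $x\in C$, $\lambda>0$. $f$ is sub-convex if every sublevel set $S_r(f)=\{x\in C: f(x)\le r\}$, $r\in\mathbb{R}$, is convex. $\mathrm{ri}(C)$ is the interior of $C$ relative to its affine hull. *)

From HB Require Import structures.
From mathcomp Require Import all_boot all_order all_algebra.
From mathcomp Require Import all_classical all_reals all_analysis.
Set Implicit Arguments. Unset Strict Implicit. Unset Printing Implicit Defensive.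
Import Order.TTheory GRing.Theory Num.Theory.
Import numFieldNormedType.Exports.
Local Open Scope classical_set_scope.
Local Open Scope ring_scope.

(* R^n is modelled as row vectors 'rV[R]_n, with its canonical normed topology
   (equivalent to the usual Euclidean topology). *)

Definition is_cone (R : realType) (n : nat) (C : set 'rV[R]_n) : Prop :=
  forall (lambda : R) x, 0 < lambda -> C x -> C (lambda *: x).

Definition is_convex (R : realType) (n : nat) (C : set 'rV[R]_n) : Prop :=
  convex_set (C : set (convex_lmodType 'rV[R]_n)).

Definition pos_homogeneous (R : realType) (n : nat) (C : set 'rV[R]_n)
    (alpha : R) (f : 'rV[R]_n -> R) : Prop :=
  forall (lambda : R) x, 0 < lambda -> C x ->
    f (lambda *: x) = powR lambda alpha * f x.

Definition sublevel (R : realType) (n : nat) (C : set 'rV[R]_n)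
    (f : 'rV[R]_n -> R) (r : R) : set 'rV[R]_n :=
  [set x | C x /\ f x <= r].

Definition sub_convex (R : realType) (n : nat) (C : set 'rV[R]_n)
    (f : 'rV[R]_n -> R) : Prop :=
  forall r : R, is_convex (sublevel C f r).

Definition affine_hull (R : realType) (n : nat) (C : set 'rV[R]_n)
    : set 'rV[R]_n :=
  [set x | exists (k : nat) (p : 'I_k -> 'rV[R]_n) (w : 'I_k -> R),
      (forall i, C (p i)) /\ \sum_(i < k) w i = 1 /\
      x = \sum_(i < k) w i *: p i].

Definition rel_interior (R : realType) (n : nat) (C : set 'rV[R]_n)
    : set 'rV[R]_n :=
  [set x | C x /\ exists2 e : R, 0 < e &
      ball x e `&` affine_hull C `<=` C].

(* Put g := f^(1/alpha). It is positively homogeneous of degree 1 and its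
   sublevel sets are those of f, so it is convex: if g x < s and g y < t then
   x / s and y / t lie in the convex set S_1(g). Near a point x of ri(C) the
   function g is bounded above, since the points of C close to x are averages
   of points on finitely many segments through x inside C, on whose endpoints
   g is bounded. A convex function bounded by B near x satisfies
   |g y - g x| <= del (B - g x) for |y - x| of order del, so g is continuous
   on ri(C), and so is f = g^alpha. *)

From HB Require Import structures.
From mathcomp Require Import all_boot all_order all_algebra.
From mathcomp Require Import all_classical all_reals all_analysis.
From mathcomp Require Import ring lra.
Import Order.TTheory GRing.Theory Num.Theory.
Import numFieldNormedType.Exports.
Local Open Scope classical_set_scope.
Local Open Scope ring_scope.

Set Implicit Arguments.
Unset Strict Implicit.
Unset Printing Implicit Defensive.

Section ConvexSets.
Variables (R : realType) (n : nat).
Implicit Types (S : set 'rV[R]_n) (x y d : 'rV[R]_n).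

Lemma is_convexP S : is_convex S -> forall x y (l : R),
  S x -> S y -> 0 <= l -> l <= 1 -> S (l *: x + (1 - l) *: y).
Proof.
move=> cS x y l Sx Sy l0 l1.
by have := cS x y (Itv01 l0 l1); rewrite !inE => /(_ Sx Sy).
Qed.

Lemma is_convex_sum S : is_convex S -> forall m (w : 'I_m -> R)
  (p : 'I_m -> 'rV[R]_n), (forall i, 0 <= w i) -> \sum_i w i = 1 ->
  (forall i, S (p i)) -> S (\sum_i w i *: p i).
Proof.
move=> cS; elim=> [|m IH] w p w0 w1 Sp.
  by move: w1; rewrite big_ord0 => /eqP; rewrite eq_sym oner_eq0.
rewrite big_ord_recr /=; move: w1; rewrite big_ord_recr /=.
set W := \sum_(i < m) w (widen_ord (leqnSn m) i) => w1.
have W0 : 0 <= W by rewrite sumr_ge0.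
have [W00|Wp] := eqVneq W 0.
  have wz (i : 'I_m) : w (widen_ord (leqnSn m) i) = 0.
    apply/eqP; move/eqP: W00; rewrite psumr_eq0 // => /allP.
    by move/(_ i); rewrite mem_index_enum => /(_ isT) /implyP /(_ isT).
  rewrite big1 ?add0r; last by move=> i _; rewrite wz scale0r.
  by rewrite [w ord_max](_ : _ = 1) ?scale1r // -w1 W00 add0r.
have Wpos : 0 < W by rewrite lt_neqAle eq_sym Wp.
have S_rest := IH (fun i => w (widen_ord (leqnSn m) i) / W)
  (fun i => p (widen_ord (leqnSn m) i)) (fun i => divr_ge0 (w0 _) W0)
  ltac:(by rewrite -mulr_suml mulfV) (fun i => Sp _).
have := is_convexP cS S_rest (Sp ord_max) W0 ltac:(by rewrite -w1 lerDl).
rewrite scaler_sumr -w1 [W + _]addrC addrK; congr S; congr (_ + _).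
apply: eq_bigr => i _; rewrite scalerA mulrCA mulfV ?mulr1 //.
Qed.

Lemma is_convex_segment S x d (t s : R) : is_convex S -> 0 < t ->
  S (x + t *: d) -> S (x + (- t) *: d) -> `|s| <= t -> S (x + s *: d).
Proof.
move=> cS t0 Sp Sm; rewrite ler_norml => /andP [sl sr].
pose l := (t + s) / (2 * t).
have l0 : 0 <= l by rewrite divr_ge0 ?mulr_ge0 //; lra.
have l1 : l <= 1 by rewrite ler_pdivrMr ?mulr_gt0 //; lra.
have := is_convexP cS Sp Sm l0 l1.
suff -> : l *: (x + t *: d) + (1 - l) *: (x + (- t) *: d) = x + s *: d by [].
rewrite !scalerDr !scalerA addrACA -!scalerDl [l + _]addrC subrK scale1r.
by congr (_ + _ *: _); rewrite /l; field; rewrite gt_eqF.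
Qed.

Lemma is_convex_parallelotope S x m (d : 'I_m -> 'rV[R]_n) (t : R)
    (c : 'I_m -> R) : is_convex S -> S x -> 0 < t ->
  (forall i, S (x + t *: d i)) -> (forall i, S (x + (- t) *: d i)) ->
  (forall i, `|c i| * m%:R <= t) -> S (x + \sum_i c i *: d i).
Proof.
move=> cS Sx t0 Sp Sm c_le.
have [m0|m_gt0] := posnP m; first by subst m; rewrite big_ord0 addr0.
pose s i := m%:R * c i.
have Ss i : S (x + s i *: d i).
  by apply: is_convex_segment cS t0 (Sp i) (Sm i) _; rewrite normrM normr_nat mulrC.
have m_neq0 : (m%:R : R) != 0 by rewrite pnatr_eq0 -lt0n.
have w_ge0 (i : 'I_m) : 0 <= (m%:R : R)^-1 by rewrite invr_ge0 ler0n.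
have w_sum : \sum_(i < m) (m%:R : R)^-1 = 1.
  by rewrite sumr_const card_ord -[_ *+ _]mulr_natr mulVf.
have := is_convex_sum cS w_ge0 w_sum Ss.
rewrite (eq_bigr (fun i => m%:R^-1 *: x + c i *: d i)); last first.
  by move=> i _; rewrite scalerDr scalerA /s mulKf.
by rewrite big_split /= -scaler_suml w_sum scale1r.
Qed.

End ConvexSets.

Section AffineHull.
Variables (R : realType) (n : nat) (C : set 'rV[R]_n).

Lemma affine_hull_line a b (s : R) : C a -> C b ->
  affine_hull C ((1 - s) *: a + s *: b).
Proof.
move=> Ca Cb.
exists 2%N, (fun i : 'I_2 => if val i == 0%N then a else b),
  (fun i : 'I_2 => if val i == 0%N then 1 - s else s).
split; first by move=> i; case: ifP.
by rewrite !big_ord_recl !big_ord0 /= !addr0 subrK.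
Qed.

Lemma ball_affine_sub_line x (e : R) : C x ->
  ball x e `&` affine_hull C `<=` C ->
  forall p (s : R), C p -> `|s| * `|p - x| < e -> C (x + s *: (p - x)).
Proof.
move=> Cx sub p s Cp lt_e; apply: sub; split.
  by rewrite -ball_normE /ball_ /= opprD addrA subrr add0r normrN normrZ.
rewrite (_ : _ + _ = (1 - s) *: x + s *: p); first exact: affine_hull_line.
by rewrite scalerBr scalerBl scale1r addrAC addrA.
Qed.

Definition direction_mx x m (q : nat -> 'rV[R]_n) : 'M[R]_(m, n) :=
  \matrix_(i < m) (q i - x).

(* Choose points of [C] whose directions from [x] have maximal rank. *)
Lemma exists_spanning_directions x : exists m (q : nat -> 'rV[R]_n),
  (forall i, (i < m)%N -> C (q i)) /\
  forall p, C p -> ((p - x) <= direction_mx x m q)%MS.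
Proof.
pose P k := exists m (q : nat -> 'rV[R]_n),
  (forall i, (i < m)%N -> C (q i)) /\ \rank (direction_mx x m q) = k.
have exP : exists k, `[< P k >].
  exists 0%N; apply/asboolP; exists 0%N, (fun=> x); split => //.
  by rewrite flatmx0 mxrank0.
have ubP k : `[< P k >] -> (k <= n)%N.
  by move=> /asboolP [m [q [_ <-]]]; exact: rank_leq_col.
have [k /asboolP [m [q [Cq rk]]] kmax] := ex_maxnP exP ubP.
exists m, q; split => // p Cp; apply/negPn/negP => p_out.
pose q' i := if i == m then p else q i.
have Cq' i : (i < m.+1)%N -> C (q' i).
  rewrite ltnS leq_eqVlt /q' => /orP [/eqP ->|im]; first by rewrite eqxx.
  by rewrite (ltn_eqF im); apply: Cq.
have sub_q : (direction_mx x m q <= direction_mx x m.+1 q')%MS.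
  apply/row_subP => i.
  rewrite (_ : row i _ = row (widen_ord (leqnSn m) i) (direction_mx x m.+1 q')).
    exact: row_sub.
  by rewrite !rowK /q' /= (ltn_eqF (ltn_ord i)).
have sub_p : ((p - x) <= direction_mx x m.+1 q')%MS.
  have -> : p - x = row ord_max (direction_mx x m.+1 q').
    by rewrite rowK /q' /= eqxx.
  exact: row_sub.
have : (\rank (direction_mx x m.+1 q') <= k)%N.
  by apply: kmax; apply/asboolP; exists m.+1, q'.
rewrite -rk leqNgt => /negP; apply.
have [le eq] := mxrank_leqif_sup sub_q.
rewrite ltn_neqAle le andbT eq; apply/negP => sub_q'.
by move: p_out; rewrite (submx_trans sub_p sub_q').
Qed.

Lemma norm_row_entry (v : 'rV[R]_n) i : `|v 0 i| <= `|v|.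
Proof.
rewrite [X in _ <= X]mx_normrE.
exact: (le_bigmax 0 (fun ij : 'I_1 * 'I_n => `|v ij.1 ij.2|) (0, i)).
Qed.

Lemma mulmx_entry_bound m (P : 'M[R]_(n, m)) : exists2 K, 0 <= K &
  forall (v : 'rV[R]_n) i, `|(v *m P) 0 i| <= K * `|v|.
Proof.
exists (\sum_i \sum_j `|P j i|); first by do 2!apply: sumr_ge0 => ? _.
move=> v i; rewrite mxE; apply: (le_trans (ler_norm_sum _ _ _)).
apply: (@le_trans _ _ (\sum_j `|v| * `|P j i|)).
  by apply: ler_sum => j _; rewrite normrM ler_wpM2r // norm_row_entry.
rewrite -mulr_sumr mulrC ler_wpM2r // (bigD1 i) //= lerDl.
by apply: sumr_ge0 => k _; apply: sumr_ge0.
Qed.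

Lemma exists_bounded_coordinates x :
  exists m (q : 'I_m -> 'rV[R]_n) (K : R), [/\ forall i, C (q i), 0 <= K &
  forall z, C z -> exists2 c : 'I_m -> R,
    z - x = \sum_i c i *: (q i - x) & forall i, `|c i| <= K * `|z - x|].
Proof.
have [m [q [Cq span]]] := exists_spanning_directions x.
have [K K0 HK] := mulmx_entry_bound (pinvmx (direction_mx x m q)).
exists m, (fun i : 'I_m => q i), K; split=> [i|//|z Cz]; first exact: Cq.
exists (fun i => ((z - x) *m pinvmx (direction_mx x m q)) 0 i) => [|i].
  rewrite -[LHS](mulmxKpV (span z Cz)) mulmx_sum_row.
  by apply: eq_bigr => i _; rewrite rowK.
exact: HK.
Qed.

End AffineHull.

Lemma sub_convex_bounded_near (R : realType) n (C : set 'rV[R]_n)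
    (f : 'rV[R]_n -> R) x (e : R) :
  (forall x, C x -> 0 <= f x) -> sub_convex C f -> C x -> 0 < e ->
  ball x e `&` affine_hull C `<=` C ->
  exists2 rho : R, 0 < rho &
    exists B, forall z, C z -> `|z - x| < rho -> f z <= B.
Proof.
move=> f_ge0 f_sc Cx e0 sub.
have [m [q [K [Cq K0 coords]]]] := exists_bounded_coordinates C x.
pose d i := q i - x.
pose T := \sum_i `|d i| + 1.
have T0 : 0 < T by rewrite ltr_pwDr // sumr_ge0.
pose t := e / (2 * T).
have t0 : 0 < t by rewrite divr_gt0 // mulr_gt0.
have C_end i (s : R) : `|s| = t -> C (x + s *: d i).
  move=> st; rewrite /d; apply: (ball_affine_sub_line Cx sub (Cq i)); rewrite st.
  have dT : `|d i| < T by rewrite ltr_pwDr // (bigD1 i) //= lerDl sumr_ge0.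
  apply: (@lt_le_trans _ _ (t * T)); first by rewrite ltr_pM2l.
  have -> : t * T = e / 2 by rewrite /t; field; rewrite gt_eqF.
  lra.
pose a i := x + t *: d i.
pose b i := x + (- t) *: d i.
have Ca i : C (a i) by apply: C_end; rewrite gtr0_norm.
have Cb i : C (b i) by apply: C_end; rewrite normrN gtr0_norm.
pose B := f x + \sum_i (f (a i) + f (b i)).
have sum_ge0 : 0 <= \sum_i (f (a i) + f (b i)).
  by apply: sumr_ge0 => i _; rewrite addr_ge0 ?f_ge0.
have ab_le i : f (a i) + f (b i) <= B.
  rewrite /B (bigD1 i) //= addrCA lerDl addr_ge0 ?f_ge0 ?sumr_ge0 // => j _.
  by rewrite addr_ge0 ?f_ge0.
have Sa i : sublevel C f B (a i).
  by split=> //; apply: le_trans (ab_le i); rewrite lerDl f_ge0.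
have Sb i : sublevel C f B (b i).
  by split=> //; apply: le_trans (ab_le i); rewrite lerDr f_ge0.
have Sx : sublevel C f B x by split; rewrite // lerDl.
have mK0 : 0 < m%:R * K + 1 by rewrite ltr_pwDr // mulr_ge0.
exists (t / (m%:R * K + 1)); first by rewrite divr_gt0.
exists B => z Cz zx.
have [c zE cK] := coords z Cz.
have : sublevel C f B (x + \sum_i c i *: d i).
  apply: is_convex_parallelotope (f_sc B) Sx t0 Sa Sb _ => i.
  move: zx; rewrite ltr_pdivlMr // => zx.
  have := cK i; have := normr_ge0 (z - x); have := ler0n R m; nra.
by rewrite -zE addrC subrK => -[].
Qed.

Lemma powRVK (R : realType) (a u : R) : 0 < a -> 0 <= u -> (u `^ a^-1) `^ a = u.
Proof. by move=> a0 u0; rewrite -powRrM mulVf ?gt_eqF // powRr1. Qed.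

Lemma powRKV (R : realType) (a u : R) : 0 < a -> 0 <= u -> (u `^ a) `^ a^-1 = u.
Proof. by move=> a0 u0; rewrite -powRrM mulfV ?gt_eqF // powRr1. Qed.

Lemma ler_powRV (R : realType) (a u v : R) : 0 < a -> 0 <= u -> 0 <= v ->
  (u `^ a^-1 <= v) = (u <= v `^ a).
Proof.
move=> a0 u0 v0; apply/idP/idP => uv.
  by rewrite -(powRVK a0 u0) ge0_ler_powR ?nnegrE ?powR_ge0 // ltW.
by rewrite -(powRKV a0 v0) ge0_ler_powR ?nnegrE ?powR_ge0 ?invr_ge0 // ltW.
Qed.

Lemma powR_continuous_nneg (R : realType) (a u0 eps : R) :
  0 < a -> 0 <= u0 -> 0 < eps -> exists2 eta : R, 0 < eta &
    forall u, 0 <= u -> `|u0 - u| < eta -> `|u0 `^ a - u `^ a| < eps.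
Proof.
move=> a0; rewrite le_eqVlt => /predU1P [<-|u0_gt0] eps0.
  exists ((eps / 2) `^ a^-1) => [|u u_ge0]; first by rewrite powR_gt0 // divr_gt0.
  rewrite !sub0r !normrN ger0_norm // powR0 ?gt_eqF // sub0r normrN.
  rewrite ger0_norm ?powR_ge0 // => u_lt; apply: (@le_lt_trans _ _ (eps / 2)); last lra.
  rewrite -[a]invrK ler_powRV ?invr_gt0 //; first exact: ltW.
  by rewrite divr_ge0 // ltW.
have u0_cont : {for u0, continuous (fun u : R => u `^ a)}.
  apply: differentiable_continuous; apply/derivable1_diffP.
  by apply: derivable_powR; rewrite in_itv /= andbT.
have /cvgrPdist_lt /(_ eps eps0) /nbhs_ballP [eta eta0 near_u0] := u0_cont.
by exists eta => // u _ u0u; apply: near_u0; rewrite -ball_normE.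
Qed.

(* Stated with explicit weights instead of the library's [convex_function],
   whose weights live in [{i01 R}]. *)
Definition convex_on (R : realType) n (C : set 'rV[R]_n) (g : 'rV[R]_n -> R) :=
  forall x y (l : R), C x -> C y -> 0 <= l -> l <= 1 ->
    g (l *: x + (1 - l) *: y) <= l * g x + (1 - l) * g y.

Section Homogeneous.
Variables (R : realType) (n : nat) (C : set 'rV[R]_n).

Lemma homogeneous_sub_convex_convex (g : 'rV[R]_n -> R) : is_cone C ->
  (forall x, C x -> 0 <= g x) -> pos_homogeneous C 1 g -> sub_convex C g ->
  convex_on C g.
Proof.
move=> cone g0 hom sc x y l Cx Cy l0 l1.
have hom1 (k : R) z : 0 < k -> C z -> g (k *: z) = k * g z.
  by move=> k0 Cz; rewrite hom // powRr1 // ltW.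
have S1 z (s : R) : C z -> g z < s -> sublevel C g 1 (s^-1 *: z).
  move=> Cz gzs; have s0 : 0 < s by apply: le_lt_trans gzs; apply: g0.
  split; first by apply: cone; rewrite ?invr_gt0.
  by rewrite hom1 ?invr_gt0 // mulrC ler_pdivrMr // mul1r ltW.
suff le_st (s t : R) : g x < s -> g y < t ->
    g (l *: x + (1 - l) *: y) <= l * s + (1 - l) * t.
  apply/ler_addgt0Pr => eps eps0.
  apply: (le_trans (le_st (g x + eps) (g y + eps) _ _)); rewrite ?ltrDl //.
  by rewrite le_eqVlt; apply/orP; left; apply/eqP; ring.
move=> gxs gyt.
have s0 : 0 < s by apply: le_lt_trans gxs; apply: g0.
have t0 : 0 < t by apply: le_lt_trans gyt; apply: g0.
set u := l * s + (1 - l) * t.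
have u0 : 0 < u by rewrite /u; nra.
pose mu := l * s / u.
have mu0 : 0 <= mu by rewrite divr_ge0 ?mulr_ge0 // ltW.
have mu1 : mu <= 1 by rewrite ler_pdivrMr // mul1r /u; nra.
have := is_convexP (sc 1) (S1 x s Cx gxs) (S1 y t Cy gyt) mu0 mu1.
have -> : mu *: (s^-1 *: x) + (1 - mu) *: (t^-1 *: y) =
          u^-1 *: (l *: x + (1 - l) *: y).
  rewrite !scalerA scalerDr !scalerA /mu.
  congr (_ *: _ + _ *: _); first by field; rewrite ?gt_eqF.
  by rewrite /u; field; rewrite -/u ?gt_eqF.
case=> Cz gz.
have u_neq0 : u != 0 by rewrite gt_eqF.
set z := l *: x + (1 - l) *: y in Cz gz *.
rewrite -[z]scale1r -(mulfV u_neq0) -scalerA hom1 //.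
by rewrite -[X in _ <= X]mulr1 ler_wpM2l // ltW.
Qed.

Lemma pos_homogeneous_root (f : 'rV[R]_n -> R) (alpha : R) : 0 < alpha ->
  (forall x, C x -> 0 <= f x) -> pos_homogeneous C alpha f ->
  pos_homogeneous C 1 (fun x => f x `^ alpha^-1).
Proof.
move=> a0 f0 hom k x k0 Cx /=.
by rewrite hom // powRM ?powR_ge0 ?f0 // powRKV ?powRr1 // ltW.
Qed.

Lemma sub_convex_root (f : 'rV[R]_n -> R) (alpha : R) : 0 < alpha ->
  (forall x, C x -> 0 <= f x) -> sub_convex C f ->
  sub_convex C (fun x => f x `^ alpha^-1).
Proof.
move=> a0 f0 sc r; have [r0|r_lt0] := leP 0 r.
  rewrite (_ : sublevel _ _ r = sublevel C f (r `^ alpha)) //.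
  apply/seteqP; split=> z [Cz fz]; split=> //=.
    by rewrite -ler_powRV ?f0.
  by rewrite ler_powRV ?f0.
move=> x y l; rewrite inE => -[_ /= fxr].
by have := le_lt_trans fxr r_lt0; rewrite ltNge powR_ge0.
Qed.

End Homogeneous.

(* Write [y = (1 - del) x + del z] and [x = l y + (1 - l) w] with [z] and [w]
   at distance [|y - x| / del] from [x]; convexity at [z] bounds [g y] from
   above and convexity at [w] bounds it from below. *)
Lemma convex_on_dist_le (R : realType) n (C : set 'rV[R]_n)
    (g : 'rV[R]_n -> R) x (r B del : R) :
  convex_on C g -> C x -> ball x r `&` affine_hull C `<=` C ->
  (forall z, C z -> `|z - x| < r -> g z <= B) -> 0 < del -> del <= 1 ->
  forall y, C y -> `|y - x| < del * r -> `|g y - g x| <= del * (B - g x).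
Proof.
move=> gc Cx sub gB del0 del1 y Cy yx.
pose v := y - x.
have far (k : R) : `|k| = del^-1 -> C (x + k *: v) /\ g (x + k *: v) <= B.
  move=> kd; have kv : `|k| * `|v| < r by rewrite kd mulrC ltr_pdivrMr // mulrC.
  have Cxk : C (x + k *: v) by rewrite /v; apply: (ball_affine_sub_line Cx sub Cy kv).
  by split=> //; apply: gB; rewrite // addrC addKr normrZ.
have [Cz gz] : C (x + del^-1 *: v) /\ g (x + del^-1 *: v) <= B.
  by apply: far; rewrite gtr0_norm ?invr_gt0.
have [Cw gw] : C (x + (- del^-1) *: v) /\ g (x + (- del^-1) *: v) <= B.
  by apply: far; rewrite normrN gtr0_norm ?invr_gt0.
have comb (a b c d : R) (u : 'rV[R]_n) :
    a *: (x + b *: u) + c *: (x + d *: u) = (a + c) *: x + (a * b + c * d) *: u.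
  by rewrite !scalerDr !scalerA addrACA -!scalerDl.
have yE : y = x + 1 *: v by rewrite scale1r /v addrC subrK.
have y_comb : (1 - del) *: x + (1 - (1 - del)) *: (x + del^-1 *: v) = y.
  rewrite -{1}[x]addr0 -[0](scale0r v) comb yE.
  rewrite (_ : _ + (1 - (1 - del)) = 1) ?scale1r; last by ring.
  by rewrite (_ : _ + _ = 1) ?scale1r //; field; rewrite gt_eqF.
have up : g y <= (1 - del) * g x + (1 - (1 - del)) * g (x + del^-1 *: v).
  by rewrite -{1}y_comb; apply: gc => //; lra.
pose l := (1 + del)^-1.
have del1_gt0 : 0 < 1 + del by lra.
have l0 : 0 <= l by rewrite invr_ge0 ltW.
have l1 : l <= 1 by rewrite invf_le1 // lerDl ltW.
have x_comb : l *: y + (1 - l) *: (x + (- del^-1) *: v) = x.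
  rewrite yE comb (_ : l + (1 - l) = 1) ?scale1r; last by ring.
  rewrite (_ : l * 1 + (1 - l) * - del^-1 = 0) ?scale0r ?addr0 //.
  by rewrite /l; field; rewrite !gt_eqF.
have down : g x <= l * g y + (1 - l) * g (x + (- del^-1) *: v).
  by rewrite -{1}x_comb; apply: gc.
have down' : g x * (1 + del) <= g y + del * B.
  rewrite -ler_pdivlMr // (le_trans down) //.
  have -> : (g y + del * B) / (1 + del) = l * g y + (1 - l) * B.
    by rewrite /l; field; rewrite gt_eqF.
  by rewrite lerD2l ler_wpM2l // subr_ge0.
rewrite ler_norml; apply/andP; split; nra.
Qed.

Lemma convex_on_dist_lt (R : realType) n (C : set 'rV[R]_n)
    (g : 'rV[R]_n -> R) x (rho e B eps : R) :
  convex_on C g -> C x -> 0 < rho -> 0 < e ->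
  ball x e `&` affine_hull C `<=` C ->
  (forall z, C z -> `|z - x| < rho -> g z <= B) -> 0 < eps ->
  exists2 r : R, 0 < r & forall y, C y -> `|y - x| < r -> `|g y - g x| < eps.
Proof.
move=> gc Cx rho0 e0 sub gB eps0.
pose r := Num.min rho e.
have sub_r : ball x r `&` affine_hull C `<=` C.
  by apply: subset_trans sub; apply: setSI; apply: le_ball; rewrite ge_min lexx orbT.
have gB_r z : C z -> `|z - x| < r -> g z <= B.
  by move=> Cz zx; apply: gB => //; apply: lt_le_trans zx _; rewrite ge_min lexx.
have gxB : g x <= B by apply: gB_r; rewrite ?subrr ?normr0 ?lt_min ?rho0.
pose del := Num.min 1 (eps / (B - g x + 1)).
have del0 : 0 < del by rewrite lt_min ltr01 divr_gt0 // ltr_pwDr // subr_ge0.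
have del1 : del <= 1 by rewrite ge_min lexx.
exists (del * r) => [|y Cy yx]; first by rewrite mulr_gt0 // lt_min rho0.
apply: le_lt_trans (convex_on_dist_le gc Cx sub_r gB_r del0 del1 Cy yx) _.
apply: (@le_lt_trans _ _ (eps / (B - g x + 1) * (B - g x))).
  by rewrite ler_wpM2r ?subr_ge0 // ge_min lexx orbT.
by rewrite mulrAC ltr_pdivrMr ?ltr_pwDr ?subr_ge0 // ltr_pM2l // ltrDl.
Qed.

Theorem mainTheorem8 (R : realType) (n : nat) (C : set 'rV[R]_n)
    (f : 'rV[R]_n -> R) (alpha : R) :
  is_cone C -> is_convex C ->
  (forall x, C x -> 0 <= f x) ->
  0 < alpha -> pos_homogeneous C alpha f ->
  sub_convex C f ->
  {within rel_interior C, continuous f}.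
Proof.
move=> cone _ f0 a0 hom sc.
pose g x := f x `^ alpha^-1.
have g0 x : C x -> 0 <= g x by move=> _; exact: powR_ge0.
have g_sc : sub_convex C g := sub_convex_root a0 f0 sc.
have g_cvx : convex_on C g.
  exact: homogeneous_sub_convex_convex cone g0 (pos_homogeneous_root a0 f0 hom) g_sc.
have fE x : C x -> f x = g x `^ alpha by move=> Cx; rewrite powRVK ?f0.
apply/subspace_continuousP => x [Cx [e e0 sub]].
have [rho rho0 [B gB]] := sub_convex_bounded_near g0 g_sc Cx e0 sub.
apply/cvgrPdist_lt => eps eps0.
have [eta eta0 near_gx] := powR_continuous_nneg a0 (g0 x Cx) eps0.
have [r r0 near_x] := convex_on_dist_lt g_cvx Cx rho0 e0 sub gB eta0.
rewrite /within /=; apply/nbhs_ballP; exists r => // y xy [Cy _].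
rewrite /from_subspace !fE //; apply: near_gx; first exact: g0.
have yx : `|y - x| < r by move: xy; rewrite -ball_normE /= distrC.
by rewrite distrC near_x.
Qed.
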